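(* Let $k,q\ge0$, $p=k+q$, $m=2^p$, $n=2^q$, and $U_m=\frac{1}{\sqrt{2^p}}H(2^p)$. Fix $c$ with $0\le c\le 2^k-1$ and inject $n$ identical bosons in the input state $\vec s=(1+nc,2+nc,\dots,n+nc)$. Then an output state $\vec t=(t_1,\dots,t_n)$ is suppressed if and only if $\beta_q(t_1-1)\oplus\beta_q(t_2-1)\oplus\dots\oplus\beta_q(t_n-1)\neq0$, where $\beta_q(x)$ denotes the $q$ least significant bits of the binary representation of $x$ (equivalently, the $q$-bit binary representation of $x\bmod 2^q$).
   Context: For $m=2^p$, the Sylvester matrix $H(m)$ is defined recursively by $H(1)=[1]$ and $H(2^p)=\begin{bmatrix}H(2^{p-1})&H(2^{p-1})\\ H(2^{p-1})&-H(2^{p-1})\end{bmatrix}$, rows and columns indexed $1,\dots,m$. $\oplus$ denotes bitwise XOR. An $n$-particle state on $m$ modes is a nondecreasing tuple $\vec t=(t_1\le\dots\le t_n)$ with $t_i\in\{1,\dots,m\}$; $\mu_k(\vec t)=|\{i:t_i=k\}|$. For input $\vec s$ and output $\vec t$, the scattering matrix is $S_{i,j}=U_{t_i,s_j}$, and the bosonic amplitude is $\mathrm{perm}\,S/\sqrt{\prod_k\mu_k(\vec s)!\prod_k\mu_k(\vec t)!}$, where $\mathrm{perm}\,A=\sum_{\sigma\in S_n}\prod_i a_{i,\sigma(i)}$. An output state is suppressed if its amplitude is zero. *)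

From Stdlib Require PeanoNat.
From HB Require Import structures.
From mathcomp Require Import all_boot all_order all_algebra all_fingroup all_field.
Set Implicit Arguments. Unset Strict Implicit. Unset Printing Implicit Defensive.
Import Order.TTheory GRing.Theory Num.Theory.
Local Open Scope ring_scope.

(* Entries of the Sylvester matrix H(2^p), with 0-based indices i, j < 2^p,
   following the recursive block definition
   H(2^(p+1)) = [[H(2^p), H(2^p)], [H(2^p), -H(2^p)]]. *)
Fixpoint sylv0 (p i j : nat) : int :=
  match p with
  | 0 => 1
  | p'.+1 =>
    let h := (2 ^ p')%N in
    if (i < h)%N then
      (if (j < h)%N then sylv0 p' i j else sylv0 p' i (j - h))
    else
      (if (j < h)%N then sylv0 p' (i - h) j else - sylv0 p' (i - h) (j - h))
  end.

(* H(2^p)_{i,j} with 1-based indices i, j in {1, ..., 2^p}. *)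
Definition sylvester (p i j : nat) : int := sylv0 p i.-1 j.-1.

Definition Umat (p i j : nat) : algC :=
  (sylvester p i j)%:~R / sqrtC (2 ^ p)%:R.

Definition permanent (R : comNzRingType) (n : nat) (A : 'M[R]_n) : R :=
  \sum_(s : 'S_n) \prod_(i < n) A i (s i).

Definition mu (t : seq nat) (k : nat) : nat := count_mem k t.

Definition is_state (m n : nat) (t : n.-tuple nat) : bool :=
  sorted leq t && all (fun x => (0 < x <= m)%N) t.

Definition scattering (p n : nat) (s t : n.-tuple nat) : 'M[algC]_n :=
  \matrix_(i < n, j < n) Umat p (tnth t i) (tnth s j).

Definition amplitude (p n : nat) (s t : n.-tuple nat) : algC :=
  permanent (scattering p s t) /
  sqrtC ((\prod_(1 <= k < (2 ^ p).+1) (mu s k)`!)%N%:R *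
         (\prod_(1 <= k < (2 ^ p).+1) (mu t k)`!)%N%:R).

Definition suppressed (p n : nat) (s t : n.-tuple nat) : Prop :=
  amplitude p s t = 0.

Definition input_state (n c : nat) : n.-tuple nat :=
  [tuple (i.+1 + n * c)%N | i < n].

Definition beta (q x : nat) : nat := (x %% 2 ^ q)%N.

Definition xor_beta (q : nat) (t : seq nat) : nat :=
  foldr PeanoNat.Nat.lxor 0%N [seq beta q x.-1 | x <- t].

(* By the Kronecker structure H(2^(k+q)) = H(2^k) (x) H(2^q), the entry of the
   scattering matrix in row t_i and input column j + 1 + 2^q c is a nonzero factor
   depending only on i, times the entry of H(2^q) in row y_i = (t_i - 1) mod 2^q and
   column j.  So t is suppressed iff the permanent of the matrix with rows
   H(2^q)_(y_i) vanishes.  These rows are the characters j |-> (-1)^<y_i, j> of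
   (Z/2)^q.  If X = y_1 xor ... xor y_n is nonzero, translating the columns by an a
   with (-1)^<X, a> = -1 multiplies the permanent by -1, so it is 0.  If X = 0, the
   permanent is 2^(2^q - 1) times an odd integer, by induction on q: group the
   columns in pairs {c, 2^(q-1) + c} and average over the swaps inside each pair.
   A pair of rows then contributes a 2 x 2 permanent which vanishes unless both
   rows have the same top bit, and otherwise is +-2 times the entry of H(2^(q-1))
   at the xor of their low bits.  This writes the permanent as a sum, over the
   perfect matchings of the rows that only pair equal top bits, of
   +-2^(2^(q-1)) times permanents of the same kind one size down; there is an odd
   number of such matchings, and each term is 2^(2^q - 1) times an odd integer. *)

From Stdlib Require Import PeanoNat.
From HB Require Import structures.
From mathcomp Require Import all_boot all_order all_algebra all_fingroup all_field.
From mathcomp Require Import zify ring.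
Set Implicit Arguments. Unset Strict Implicit. Unset Printing Implicit Defensive.
Import Order.TTheory GRing.Theory Num.Theory.

(** * Bitwise exclusive or *)

Lemma Nat_div2_oddE n : Nat.div2 n = n./2 /\ Nat.odd n = odd n.
Proof.
suff [] : (Nat.div2 n = n./2 /\ Nat.odd n = odd n) /\
          (Nat.div2 n.+1 = n.+1./2 /\ Nat.odd n.+1 = odd n.+1) by [].
elim: n => [|n [[IH1 IH2] [IH3 IH4]]] //.
do !split => //; first by rewrite [LHS]/= IH1.
by rewrite Nat.odd_succ Nat.even_succ IH2 /=; case: (odd n).
Qed.

Lemma lxor_halfE a b :
  Nat.lxor a b = (odd a (+) odd b) + (Nat.lxor a./2 b./2).*2.
Proof.
apply: Nat.bits_inj => -[|i].
  rewrite Nat.lxor_spec !Nat.bit0_odd !(proj2 (Nat_div2_oddE _)).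
  by rewrite oddD odd_double addbF; case: (odd a); case: (odd b).
rewrite Nat.lxor_spec -!Nat.testbit_div2 !(proj1 (Nat_div2_oddE _)).
by rewrite half_bit_double Nat.lxor_spec.
Qed.

Lemma half_ltn_exp2S q a : a < 2 ^ q.+1 -> a./2 < 2 ^ q.
Proof. by rewrite expnS; have := odd_double_half a; move: (odd a) => [] ?; lia. Qed.

Lemma lxor_ltn_exp2 q a b : a < 2 ^ q -> b < 2 ^ q -> Nat.lxor a b < 2 ^ q.
Proof.
elim: q a b => [|q IH] a b; first by rewrite !ltnS !leqn0 => /eqP-> /eqP->.
move=> /half_ltn_exp2S ha /half_ltn_exp2S hb; rewrite lxor_halfE expnS.
by have := IH _ _ ha hb; case: (_ (+) _) => /=; lia.
Qed.

Lemma exp2S_split q y : y < 2 ^ q.+1 -> y = (2 ^ q <= y) * 2 ^ q + y %% 2 ^ q.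
Proof.
rewrite expnS => hy; case: leqP => h; last by rewrite mul0n add0n modn_small.
have lt : y - 2 ^ q < 2 ^ q by lia.
by rewrite mul1n -{2}(subnK h) modnDr modn_small // subnKC.
Qed.

Lemma exp2S_splitP q y : y < 2 ^ q.+1 ->
  exists (e : bool) a, a < 2 ^ q /\ y = e * 2 ^ q + a.
Proof.
move=> /exp2S_split hy.
by exists (2 ^ q <= y), (y %% 2 ^ q); rewrite ltn_pmod ?expn_gt0.
Qed.

Lemma lxor_exp2D q (e f : bool) a b : a < 2 ^ q -> b < 2 ^ q ->
  Nat.lxor (e * 2 ^ q + a) (f * 2 ^ q + b) = (e (+) f) * 2 ^ q + Nat.lxor a b.
Proof.
elim: q a b => [|q IH] a b.
  by rewrite !ltnS !leqn0 => /eqP-> /eqP->; case: e; case: f.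
move=> ha hb; rewrite lxor_halfE [in RHS]lxor_halfE.
have odd_top (g : bool) x : odd (g * 2 ^ q.+1 + x) = odd x.
  by rewrite oddD oddM oddX andbF.
have half_top (g : bool) x : (g * 2 ^ q.+1 + x)./2 = g * 2 ^ q + x./2.
  by rewrite expnS mulnCA mul2n halfD odd_double doubleK.
rewrite !odd_top !half_top IH ?half_ltn_exp2S // doubleD addnCA.
by rewrite expnS mulnCA mul2n.
Qed.

Lemma lxorKl a : cancel (Nat.lxor a) (Nat.lxor a).
Proof. by move=> u; rewrite -Nat.lxor_assoc Nat.lxor_nilpotent Nat.lxor_0_l. Qed.

Lemma lxorA : associative Nat.lxor.
Proof. by move=> a b c; rewrite Nat.lxor_assoc. Qed.

HB.instance Definition _ :=
  Monoid.isComLaw.Build nat 0 Nat.lxor lxorA Nat.lxor_comm Nat.lxor_0_l.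

Lemma big_lxor_ltn_exp2 q (I : finType) (P : pred I) (f : I -> nat) :
  (forall i, P i -> f i < 2 ^ q) -> \big[Nat.lxor/0]_(i | P i) f i < 2 ^ q.
Proof.
move=> h; apply: (big_ind (fun a => a < 2 ^ q)) => //; first by rewrite expn_gt0.
exact: lxor_ltn_exp2.
Qed.

Lemma big_lxor_exp2S q (I : finType) (A : {pred I}) (y : I -> nat) :
  (forall i, i \in A -> y i < 2 ^ q.+1) ->
  \big[Nat.lxor/0]_(i in A) y i =
  odd #|[set i in A | 2 ^ q <= y i]| * 2 ^ q
    + \big[Nat.lxor/0]_(i in A) (y i %% 2 ^ q).
Proof.
move=> hy; have -> : #|[set i in A | 2 ^ q <= y i]| = \sum_(i in A | 2 ^ q <= y i) 1.
  by rewrite -sum1_card; apply: eq_bigl => i; rewrite inE.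
pose K (a n z : nat) := a = odd n * 2 ^ q + z /\ z < 2 ^ q.
suff [] : K (\big[Nat.lxor/0]_(i in A) y i) (\sum_(i in A | 2 ^ q <= y i) 1)
            (\big[Nat.lxor/0]_(i in A) (y i %% 2 ^ q)) by [].
rewrite big_mkcondr /=; apply: big_rec3; first by split; rewrite ?expn_gt0.
move=> i a n z hi [-> hz]; split; last by rewrite lxor_ltn_exp2 ?ltn_pmod ?expn_gt0.
rewrite {1}(exp2S_split (hy i hi)) lxor_exp2D ?ltn_pmod ?expn_gt0 //.
by case: (2 ^ q <= y i); rewrite ?oddD ?oddb.
Qed.

(** * Matchings inside the classes of a two-colouring *)

Lemma odd_sum_odd (I : finType) (A : {pred I}) (f : I -> nat) :
  (forall i, i \in A -> odd (f i)) -> odd (\sum_(i in A) f i) = odd #|A|.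
Proof.
move=> h; rewrite -sum1_card.
by apply: (big_rec2 (fun a b => odd a = odd b)) => // i a b /h fi e; rewrite !oddD e fi.
Qed.

Section ClassMatchings.
Variables (T : finType) (cl : T -> bool).

Definition class_pair (S : {set T}) : bool :=
  (#|S| == 2) && [forall x in S, forall y in S, cl x == cl y].

Definition class_matchings (U : {set T}) : {set {set {set T}}} :=
  [set P | partition P U && [forall S in P, class_pair S]].

Lemma class_matchingsE U P :
  (P \in class_matchings U) = partition P U && [forall S in P, class_pair S].
Proof. by rewrite inE. Qed.

Lemma class_pair2 x y : x != y -> cl x = cl y -> class_pair [set x; y].
Proof.
move=> nxy cxy; rewrite /class_pair cards2 nxy.
by apply/forall_inP => u /set2P[]->; apply/forall_inP => v /set2P[]->; rewrite ?cxy.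
Qed.

Lemma class_pairP S : class_pair S ->
  exists x y, [/\ x != y, cl x = cl y & S = [set x; y]].
Proof.
case/andP => /cards2P[x [y [nxy ->]]] /forall_inP/(_ x (set21 x y))/forall_inP.
by move=> /(_ y (set22 x y))/eqP cxy; exists x, y.
Qed.

Definition partner (P : {set {set T}}) (x : T) : T := odflt x [pick y in pblock P x :\ x].

Lemma partner2 (x y : T) : y != x -> odflt x [pick z in [set x; y] :\ x] = y.
Proof.
move=> nyx; case: pickP => [z|/(_ y)]; rewrite !inE ?nyx ?eqxx ?orbT //=.
by case/andP => nzx /orP[/eqP zx|/eqP ->//]; rewrite zx eqxx in nzx.
Qed.

Lemma class_matching_pblock (U : {set T}) P x : P \in class_matchings U -> x \in U ->
  let y := partner P x in
  [/\ y \in U, y != x, cl y = cl x & pblock P x = [set x; y]].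
Proof.
rewrite class_matchingsE => /andP[partP /forall_inP clP] xU.
have xP : x \in cover P by rewrite (cover_partition partP).
have [u [v [nuv cuv Px]]] := class_pairP (clP _ (pblock_mem xP)).
have [y [nyx cyx Pxy]] : exists y, [/\ y != x, cl y = cl x & pblock P x = [set x; y]].
  have : x \in pblock P x by rewrite mem_pblock.
  rewrite Px => /set2P[]->.
    by exists v; split=> //; rewrite eq_sym.
  by exists u; split=> //; rewrite setUC.
rewrite /partner Pxy partner2 //; split=> //.
apply: (subsetP (partitionS partP (pblock_mem xP))).
by rewrite Pxy !inE eqxx orbT.
Qed.

Lemma class_matchings_set0 : class_matchings set0 = [set set0].
Proof.
apply/setP => P; rewrite !inE partition_set0.
by apply/andP/eqP => [[/eqP]|->] //; split=> //; apply/forall_inP => S; rewrite inE.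
Qed.

Lemma class_matchings_partner (U : {set T}) x y :
  x \in U -> y \in U -> y != x -> cl y = cl x ->
  #|[set P in class_matchings U | partner P x == y]|
    = #|class_matchings (U :\: [set x; y])|.
Proof.
move=> xU yU nyx cyx; set A := [set x; y].
have AU : A \subset U by apply/subsetP => z /set2P[]->.
have A0 : A != set0 by apply/set0Pn; exists x; rewrite !inE eqxx.
have A_notin Q : Q \in class_matchings (U :\: A) -> A \notin Q.
  rewrite class_matchingsE => /andP[partQ _]; apply/negP.
  by move=> /(partitionS partQ)/subsetP/(_ x (set21 x y)); rewrite !inE eqxx.
suff -> : [set P in class_matchings U | partner P x == y]
          = [set A |: Q | Q in class_matchings (U :\: A)].
  rewrite card_in_imset // => Q Q' /A_notin nAQ /A_notin nAQ' e.
  by rewrite -(setU1K nAQ) e setU1K.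
apply/setP => P; apply/idP/imsetP.
  rewrite inE => /andP[CP /eqP Pxy].
  have [_ _ _] := class_matching_pblock CP xU; rewrite Pxy -/A => PA.
  move: CP; rewrite class_matchingsE => /andP[partP /forall_inP clP].
  have AP : A \in P by rewrite -PA pblock_mem // (cover_partition partP).
  exists (P :\ A); last by rewrite setD1K.
  rewrite class_matchingsE partitionD1 //=.
  by apply/forall_inP => S /setD1P[_ /clP].
case=> Q; rewrite class_matchingsE => /andP[partQ /forall_inP clQ] ->.
have dAU : [disjoint A & U :\: A] by rewrite -setI_eq0 setDE setICA setICr setI0.
have partAQ := partitionU1 partQ A0 dAU.
rewrite setDE setUIr setUCr setIT (setUidPr AU) in partAQ.
have AQx : pblock (A |: Q) x = A.
  by rewrite (def_pblock (partition_trivIset partAQ) (setU11 A Q)) ?set21.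
rewrite inE class_matchingsE partAQ /partner AQx partner2 ?eqxx ?andbT //=.
by apply/forall_inP => S /setU1P[->|/clQ //]; rewrite class_pair2 // eq_sym.
Qed.

Lemma even_card_class (U : {set T}) b : ~~ odd #|U| -> ~~ odd #|[set x in U | cl x]| ->
  ~~ odd #|[set x in U | cl x == b]|.
Proof.
case: b => evenU evenC.
  suff -> : [set x in U | cl x == true] = [set x in U | cl x] by [].
  by apply/setP => x; rewrite !inE eqb_id.
have -> : [set x in U | cl x == false] = U :\: [set x in U | cl x].
  by apply/setP => x; rewrite !inE eqbF_neg; case: (x \in U); rewrite ?andbT.
have CU : [set x in U | cl x] \subset U by apply/subsetP => x; rewrite inE => /andP[].
by rewrite cardsDS // oddB ?subset_leq_card // (negbTE evenU) (negbTE evenC).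
Qed.

Lemma odd_card_class_setD2 (U : {set T}) x y :
  x \in U -> y \in U -> y != x -> cl y = cl x ->
  odd #|[set z in U :\: [set x; y] | cl z]| = odd #|[set z in U | cl z]|.
Proof.
move=> xU yU nyx cyx; set A := [set x; y].
have -> : [set z in U :\: A | cl z] = [set z in U | cl z] :\: A.
  by apply/setP => z; rewrite !inE andbA.
have CA : [set z in U | cl z] :&: A = if cl x then A else set0.
  case cx: (cl x).
    by apply/setIidPr/subsetP => z /set2P[]->; rewrite inE ?xU ?yU ?cyx cx.
  apply/setP => z; rewrite in_setI in_set0 inE; apply/negP.
  by case/andP=> /andP[_ cz] /set2P[] zxy; move: cz; rewrite zxy ?cyx cx.
rewrite cardsD oddB ?subset_leq_card ?subsetIl // CA.
by case: (cl x); rewrite ?cards2 1?eq_sym ?nyx ?cards0 ?addbF.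
Qed.

Lemma odd_card_class_matchings (U : {set T}) :
  ~~ odd #|U| -> ~~ odd #|[set x in U | cl x]| -> odd #|class_matchings U|.
Proof.
have [n] := ubnP #|U|; elim: n U => // n IH U ltUn evenU evenC.
have [->|[x xU]] := set_0Vmem U; first by rewrite class_matchings_set0 cards1.
set D := [set y in U :\ x | cl y == cl x].
have -> : #|class_matchings U|
    = \sum_(y in D) #|[set P in class_matchings U | partner P x == y]|.
  rewrite -sum1_card (partition_big (partner^~ x) (mem D)) /=; last first.
    move=> P CP; have [yU nyx cyx _] := class_matching_pblock CP xU.
    by rewrite !inE yU nyx cyx eqxx.
  by apply: eq_bigr => y _; rewrite -sum1_card; apply: eq_bigl => P; rewrite inE.
rewrite odd_sum_odd.
  have -> : D = [set z in U | cl z == cl x] :\ x.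
    by apply/setP => z; rewrite !inE andbA.
  have := even_card_class (cl x) evenU evenC.
  by rewrite (cardsD1 x) inE xU eqxx add1n /= negbK.
move=> y; rewrite !inE => /andP[/andP[nyx yU] /eqP cyx].
have AU : [set x; y] \subset U by apply/subsetP => z /set2P[]->.
have cardA : #|[set x; y]| = 2 by rewrite cards2 eq_sym nyx.
have cardUA : #|U :\: [set x; y]| = (#|U| - 2)%N by rewrite cardsDS // cardA.
have le2U : (2 <= #|U|)%N by rewrite -cardA subset_leq_card.
rewrite class_matchings_partner //; apply: IH.
- by rewrite cardUA; lia.
- by rewrite cardUA oddB // (negbTE evenU).
- by rewrite odd_card_class_setD2.
Qed.
End ClassMatchings.

Local Open Scope ring_scope.

(** * Entries of the Sylvester matrix *)

Lemma sylv0S q (e f : bool) a b : (a < 2 ^ q)%N -> (b < 2 ^ q)%N ->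
  sylv0 q.+1 (e * 2 ^ q + a) (f * 2 ^ q + b) = sylv0 q a b * (-1) ^+ (e && f).
Proof.
move=> ha hb /=; have top x : (2 ^ q + x < 2 ^ q)%N = false by rewrite ltnNge leq_addr.
by case: e; case: f; rewrite /= ?mul1n ?mul0n ?add0n ?ha ?hb ?top ?addKn ?mulr1 ?mulrN1.
Qed.

Lemma sylv0_lxorl q a b c : (a < 2 ^ q)%N -> (b < 2 ^ q)%N -> (c < 2 ^ q)%N ->
  sylv0 q (Nat.lxor a b) c = sylv0 q a c * sylv0 q b c.
Proof.
elim: q a b c => [|q IH] a b c; first by rewrite !ltnS !leqn0 => /eqP-> /eqP-> /eqP->.
move=> /exp2S_splitP[e [a' [ha ->]]] /exp2S_splitP[f [b' [hb ->]]].
move=> /exp2S_splitP[g [c' [hc ->]]].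
rewrite lxor_exp2D // !sylv0S ?lxor_ltn_exp2 // IH //.
by case: e; case: f; case: g; rewrite /= ?mulr1 ?mulrN1 ?mulNr ?mulrN ?opprK.
Qed.

Lemma sylv0C q a b : (a < 2 ^ q)%N -> (b < 2 ^ q)%N -> sylv0 q a b = sylv0 q b a.
Proof.
elim: q a b => [|q IH] a b //.
move=> /exp2S_splitP[e [a' [ha ->]]] /exp2S_splitP[f [b' [hb ->]]].
by rewrite !sylv0S // IH // andbC.
Qed.

Lemma sylv0_lxorr q a b c : (a < 2 ^ q)%N -> (b < 2 ^ q)%N -> (c < 2 ^ q)%N ->
  sylv0 q c (Nat.lxor a b) = sylv0 q c a * sylv0 q c b.
Proof.
move=> ha hb hc.
by rewrite sylv0C ?lxor_ltn_exp2 // sylv0_lxorl // (sylv0C ha) // (sylv0C hb).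
Qed.

Lemma sylv0_neq0 q a b : sylv0 q a b != 0.
Proof.
elim: q a b => [|q IH] a b //=.
by do 2 case: ifP => _ //; rewrite oppr_eq0.
Qed.

Lemma sylv0_0l q b : sylv0 q 0 b = 1.
Proof. by elim: q b => [|q IH] b //=; rewrite expn_gt0 /=; case: ifP. Qed.

Lemma sylv0_row_neg q a : (0 < a < 2 ^ q)%N ->
  exists2 b, (b < 2 ^ q)%N & sylv0 q a b = -1.
Proof.
elim: q a => [|q IH] a; first by case: a.
move=> /andP[a_gt0 /exp2S_splitP[e [a' [ha' def_a]]]].
have lt_top : (2 ^ q < 2 ^ q.+1)%N by rewrite ltn_exp2l.
case: (posnP a') => [a'0|a'_gt0].
  exists (true * 2 ^ q + 0)%N; first by rewrite mul1n addn0.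
  move: a_gt0; rewrite def_a a'0 {def_a}; case: e => // _.
  by rewrite sylv0S ?expn_gt0 // sylv0_0l.
have := IH a'; rewrite a'_gt0 ha' => /(_ isT) [b hb ab].
exists (false * 2 ^ q + b)%N; first by rewrite mul0n add0n (ltn_trans hb).
by rewrite def_a sylv0S // ab andbF mulr1.
Qed.

Lemma sylv0_kron k q a b c d : (a < 2 ^ k)%N -> (c < 2 ^ k)%N ->
  (b < 2 ^ q)%N -> (d < 2 ^ q)%N ->
  sylv0 (k + q) (a * 2 ^ q + b) (c * 2 ^ q + d) = sylv0 k a c * sylv0 q b d.
Proof.
elim: k a c => [|k IH] a c.
  by rewrite !ltnS !leqn0 => /eqP-> /eqP-> hb hd; rewrite !mul0n !add0n mul1r.
move=> /exp2S_splitP[e [a' [ha ->]]] /exp2S_splitP[f [c' [hc ->]]] hb hd.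
have lt x y : (x < 2 ^ k)%N -> (y < 2 ^ q)%N -> (x * 2 ^ q + y < 2 ^ (k + q))%N.
  move=> hx hy; rewrite expnD; apply: leq_trans (_ : x.+1 * 2 ^ q <= _)%N.
    by rewrite mulSn; lia.
  by rewrite leq_mul2r hx orbT.
rewrite addSn !mulnDl -!mulnA -!expnD -!addnA !sylv0S ?lt // IH //.
by rewrite mulrAC.
Qed.

Lemma prod_sylv0_lxor q (I : finType) (P : pred I) (f : I -> nat) b :
  (forall i, P i -> f i < 2 ^ q)%N -> (b < 2 ^ q)%N ->
  \prod_(i | P i) sylv0 q (f i) b = sylv0 q (\big[Nat.lxor/0%N]_(i | P i) f i) b.
Proof.
move=> hf hb; suff [] : \prod_(i | P i) sylv0 q (f i) b
    = sylv0 q (\big[Nat.lxor/0%N]_(i | P i) f i) b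
  /\ (\big[Nat.lxor/0%N]_(i | P i) f i < 2 ^ q)%N by [].
apply: (big_rec2 (fun z x => z = sylv0 q x b /\ (x < 2 ^ q)%N)).
  by rewrite sylv0_0l expn_gt0.
by move=> i z x hi [-> hx]; rewrite sylv0_lxorl ?lxor_ltn_exp2 ?hf.
Qed.

(** * Permanents of sets of rows *)

Definition inj_into (C J : finType) (U : {set J}) (f : {ffun C -> J}) : bool :=
  injectiveb f && [forall c, f c \in U].

Definition perm_rows (C J : finType) (U : {set J}) (w : J -> C -> int) : int :=
  \sum_(f : {ffun C -> J} | inj_into U f) \prod_c w (f c) c.

Definition hperm q (J : finType) (U : {set J}) (y : J -> nat) : int :=
  perm_rows U (fun j (c : 'I_(2 ^ q)) => sylv0 q (y j) c).

Section InjInto.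
Variables (C J : finType) (U : {set J}) (f : {ffun C -> J}).
Hypothesis f_into : inj_into U f.

Lemma inj_into_inj : injective f.
Proof. by case/andP: f_into => /injectiveP. Qed.

Lemma inj_into_mem c : f c \in U.
Proof. by case/andP: f_into => _ /forallP. Qed.

Lemma inj_into_image : #|C| = #|U| -> [set f c | c in C] = U.
Proof.
move=> cardCU; apply/eqP; rewrite eqEcard card_imset; last exact: inj_into_inj.
rewrite cardCU leqnn andbT.
by apply/subsetP => _ /imsetP[c _ ->]; apply: inj_into_mem.
Qed.

End InjInto.

Lemma perm_rows_reindex (C C' J : finType) (U : {set J}) (w : J -> C -> int)
    (phi : C' -> C) (psi : C -> C') :
  cancel phi psi -> cancel psi phi ->
  perm_rows U w = perm_rows U (fun j c' => w j (phi c')).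
Proof.
move=> phiK psiK; rewrite /perm_rows.
rewrite (reindex (fun g : {ffun C' -> J} => [ffun c => g (psi c)])); last first.
  exists (fun f : {ffun C -> J} => [ffun c' => f (phi c')]) => g _;
  by apply/ffunP => c; rewrite !ffunE ?phiK ?psiK.
apply: eq_big => g.
  rewrite /inj_into; congr andb.
    apply/injectiveP/injectiveP => g_inj x1 x2.
      by move=> e; apply: (can_inj phiK); apply: g_inj; rewrite !ffunE !phiK.
    by rewrite !ffunE => /g_inj /(can_inj psiK).
  apply/forallP/forallP => gU c; last by rewrite ffunE.
  by have := gU (phi c); rewrite ffunE phiK.
move=> _; rewrite (reindex phi); last by exists psi => ? _.
by apply: eq_bigr => c' _; rewrite ffunE phiK.
Qed.

Lemma hperm0 (J : finType) (U : {set J}) (y : J -> nat) : #|U| = 1%N -> hperm 0 U y = 1.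
Proof.
move=> /eqP/cards1P[j0 ->]; rewrite /hperm /perm_rows.
rewrite (eq_bigr (fun _ => 1)) => [|f _]; last exact: big1.
rewrite sumr_const (_ : #|_| = 1%N) //.
rewrite -cardsE; apply/eqP/cards1P; exists [ffun => j0]; apply/setP => f; rewrite !inE.
apply/andP/eqP => [[_ /forallP fj0]|->].
  by apply/ffunP => c; rewrite ffunE; apply/set1P.
split; last by apply/forallP => c; rewrite ffunE set11.
by apply/injectiveP => -[[]//] ? [[]//] ? _; apply: val_inj.
Qed.

Section ColumnSplit.
Variable q : nat.

Lemma col_split_ltn (x : 'I_(2 ^ q) * bool) : (x.2 * 2 ^ q + x.1 < 2 ^ q.+1)%N.
Proof. by case: x => c []; rewrite /= expnS ?mul1n ?mul0n; have := ltn_ord c; lia. Qed.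

Definition col_join (x : 'I_(2 ^ q) * bool) : 'I_(2 ^ q.+1) := Ordinal (col_split_ltn x).

Definition col_split (c : 'I_(2 ^ q.+1)) : 'I_(2 ^ q) * bool :=
  (Ordinal (ltn_pmod c (expn_gt0 2 q)), (2 ^ q <= c)%N).

Lemma col_joinK : cancel col_join col_split.
Proof.
move=> [c e]; rewrite /col_join /col_split /=; congr pair.
  by apply: val_inj => /=; rewrite modnMDl modn_small.
by case: e; rewrite ?mul1n ?mul0n ?leq_addr // add0n leqNgt ltn_ord.
Qed.

Lemma col_splitK : cancel col_split col_join.
Proof. by move=> c; apply: val_inj => /=; rewrite -exp2S_split. Qed.

Lemma hpermS (J : finType) (U : {set J}) (y : J -> nat) :
  hperm q.+1 U y =
  perm_rows U (fun j (x : 'I_(2 ^ q) * bool) => sylv0 q.+1 (y j) (x.2 * 2 ^ q + x.1)).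
Proof. exact: perm_rows_reindex col_joinK col_splitK. Qed.

End ColumnSplit.

Section ColumnPairs.
Variables (h : nat) (J : finType) (U : {set J}).

Definition flip_cols (b : {ffun 'I_h -> bool}) (g : {ffun 'I_h * bool -> J}) :
  {ffun 'I_h * bool -> J} := [ffun x => g (x.1, x.2 (+) b x.1)].

Lemma flip_colsK b : involutive (flip_cols b).
Proof. by move=> g; apply/ffunP => -[c e]; rewrite !ffunE /= addbK. Qed.

Lemma inj_into_flip_cols b g : inj_into U (flip_cols b g) = inj_into U g.
Proof.
rewrite /inj_into; congr andb.
  apply/injectiveP/injectiveP => g_inj.
    move=> [c e] [c' e'] ee.
    have := g_inj (c, e (+) b c) (c', e' (+) b c'); rewrite !ffunE /= !addbK.
    by case/(_ ee) => ec; move: ee; rewrite ec => _ /addIb ->.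
  by move=> [c e] [c' e']; rewrite !ffunE /= => /g_inj[ec]; rewrite ec => /addIb ->.
apply/forallP/forallP => gU x; last by rewrite ffunE.
by have := gU (x.1, x.2 (+) b x.1); rewrite ffunE /= addbK -surjective_pairing.
Qed.

(* Averaging over the 2^h ways of swapping the two columns inside each pair. *)
Lemma perm_rows_col_pairs (w : J -> 'I_h * bool -> int) :
  (2 ^ h)%:R * perm_rows U w =
  \sum_(g : {ffun 'I_h * bool -> J} | inj_into U g)
    \prod_c (w (g (c, true)) (c, true) * w (g (c, false)) (c, false) +
             w (g (c, false)) (c, true) * w (g (c, true)) (c, false)).
Proof.
have -> : (2 ^ h)%:R * perm_rows U w = \sum_(b : {ffun 'I_h -> bool}) perm_rows U w.
  by rewrite sumr_const card_ffun card_bool card_ord mulr_natl.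
have flipE b : perm_rows U w =
    \sum_(g : {ffun 'I_h * bool -> J} | inj_into U g) \prod_x w (flip_cols b g x) x.
  rewrite /perm_rows (reindex_inj (inv_inj (flip_colsK b))).
  by apply: eq_bigl => g; rewrite inj_into_flip_cols.
rewrite (eq_bigr _ (fun b _ => flipE b)) exchange_big /=; apply: eq_bigr => g _.
rewrite (eq_bigr (fun b : {ffun 'I_h -> bool} => \prod_c
    (w (g (c, ~~ b c)) (c, true) * w (g (c, b c)) (c, false)))); last first.
  move=> b _; pose F c e := w (flip_cols b g (c, e)) (c, e).
  rewrite (eq_bigr (fun x => F x.1 x.2)) => [|[] //]; rewrite -(pair_bigA _ F).
  by apply: eq_bigr => c _; rewrite big_bool /F !ffunE.
rewrite -(bigA_distr_bigA (fun c (e : bool) =>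
  w (g (c, ~~ e)) (c, true) * w (g (c, e)) (c, false))).
by apply: eq_bigr => c _; rewrite big_bool addrC.
Qed.

Definition col_pairs (g : {ffun 'I_h * bool -> J}) : {ffun 'I_h -> {set J}} :=
  [ffun c => [set g (c, true); g (c, false)]].

Definition is_col_pairs (T : {ffun 'I_h -> {set J}}) : bool :=
  [exists g, inj_into U g && (col_pairs g == T)].

Lemma set2_inj (a b a' b' : J) : [set a; b] = [set a'; b'] -> a != b ->
  (a = a' /\ b = b') \/ (a = b' /\ b = a').
Proof.
move=> e nab; have := set21 a b; have := set22 a b; rewrite e.
move=> /set2P[] eb /set2P[] ea; move: nab; rewrite ea eb ?eqxx //.
- by right.
- by left.
Qed.

Lemma card_col_pairs_fiber g0 : inj_into U g0 ->
  #|[set g | inj_into U g && (col_pairs g == col_pairs g0)]| = (2 ^ h)%N.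
Proof.
move=> g0U; have g0_inj := inj_into_inj g0U.
suff -> : [set g | inj_into U g && (col_pairs g == col_pairs g0)]
          = [set flip_cols b g0 | b in {ffun 'I_h -> bool}].
  rewrite card_imset ?card_ffun ?card_bool ?card_ord // => b b' e.
  apply/ffunP => c; have := congr1 (fun f : {ffun _ -> J} => f (c, false)) e.
  by rewrite !ffunE /= => /g0_inj[].
apply/setP => g; rewrite inE; apply/andP/imsetP => [[gU /eqP e]|[b _ ->]].
  have g_inj := inj_into_inj gU.
  exists [ffun c => g (c, false) != g0 (c, false)] => //.
  apply/ffunP => -[c ee]; rewrite !ffunE /=.
  have := congr1 (fun f : {ffun 'I_h -> {set J}} => f c) e; rewrite !ffunE.
  have nab : g (c, true) != g (c, false) by apply/eqP => /g_inj[].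
  have nab0 : g0 (c, true) != g0 (c, false) by apply/eqP => /g0_inj[].
  case/set2_inj=> // -[e1 e2]; first by rewrite e2 eqxx; case: ee; rewrite /= ?e1 ?e2.
  by rewrite [in X in _ (+) X]e2 nab0; case: ee; rewrite /= ?e1 ?e2.
split; first by rewrite inj_into_flip_cols.
apply/eqP/ffunP => c; rewrite !ffunE /=.
by case: (b c); rewrite //= setUC.
Qed.

Lemma sum_col_pairs (F : {ffun 'I_h -> {set J}} -> int) :
  \sum_(g : {ffun 'I_h * bool -> J} | inj_into U g) F (col_pairs g) =
  (2 ^ h)%:R * \sum_(T | is_col_pairs T) F T.
Proof.
rewrite (partition_big col_pairs is_col_pairs) /=; last first.
  by move=> g gU; apply/existsP; exists g; rewrite gU eqxx.
rewrite mulr_sumr; apply: eq_bigr => T /existsP[g0 /andP[g0U /eqP <-]].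
rewrite (eq_bigr (fun _ => F (col_pairs g0))) => [|g /andP[_ /eqP ->] //].
by rewrite sumr_const mulr_natl -(card_col_pairs_fiber g0U) cardsE.
Qed.

End ColumnPairs.

Section BlockMatchings.
Variables (h : nat) (J : finType) (U : {set J}) (cl : J -> bool).
Hypothesis cardU : #|U| = (h + h)%N.

Definition class_blocks (T : {ffun 'I_h -> {set J}}) := [forall c, class_pair cl (T c)].

Definition blocks (T : {ffun 'I_h -> {set J}}) : {set {set J}} := [set T c | c in 'I_h].

Lemma card_class_matching P : P \in class_matchings cl U -> #|P| = h.
Proof.
rewrite class_matchingsE => /andP[partP /forall_inP clP].
have := card_partition partP; rewrite cardU.
rewrite (eq_bigr (fun _ => 2%N)) => [|S /clP/andP[/eqP] //].
by rewrite sum_nat_const; lia.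
Qed.

Lemma blocks_class_matching T : is_col_pairs U T -> class_blocks T ->
  blocks T \in class_matchings cl U.
Proof.
case/existsP => g /andP[gU /eqP <-] /forallP clT.
have g_inj := inj_into_inj gU.
have [partP _] : partition (blocks (col_pairs g)) (cover (blocks (col_pairs g)))
                 /\ {in 'I_h &, injective (col_pairs g)}.
  apply: indexed_partition => [i j _ _ nji|i _].
    rewrite -setI_eq0; apply/eqP/setP => v; rewrite !inE !ffunE !inE.
    apply/negbTE/negP => /andP[/orP[]/eqP-> /orP[]/eqP/g_inj/(congr1 fst)/= eij];
    by rewrite eij eqxx in nji.
  by rewrite ffunE; apply/set0Pn; exists (g (i, true)); rewrite set21.
have covU : cover (blocks (col_pairs g)) = U.
  apply/eqP; rewrite eqEsubset; apply/andP; split.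
    apply/subsetP => v /bigcupP[_ /imsetP[c _ ->]]; rewrite ffunE.
    by move=> /set2P[]->; apply: inj_into_mem gU _.
  rewrite -(inj_into_image gU) ?card_prod ?card_ord ?card_bool ?cardU; last by lia.
  apply/subsetP => _ /imsetP[[c e] _ ->]; apply/bigcupP.
  by exists (col_pairs g c); [apply: imset_f | rewrite ffunE; case: e; rewrite !inE eqxx ?orbT].
rewrite class_matchingsE -covU partP /=.
by apply/forall_inP => _ /imsetP[c _ ->]; apply: clT.
Qed.

Lemma col_pairs_inj_into P T : is_col_pairs U T -> blocks T == P -> inj_into P T.
Proof.
case/existsP => g /andP[gU /eqP <-] /eqP <-.
apply/andP; split; last by apply/forallP => c; apply: imset_f.
apply/injectiveP => c c'; rewrite !ffunE => e.
have : g (c, true) \in [set g (c', true); g (c', false)] by rewrite -e set21.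
by case/set2P => /(inj_into_inj gU)[].
Qed.

Variable j0 : J.
Definition first_of (S : {set J}) := odflt j0 [pick j in S].
Definition second_of (S : {set J}) := odflt j0 [pick j in S :\ first_of S].

Lemma first_second (S : {set J}) : #|S| = 2 ->
  [/\ first_of S \in S, second_of S \in S, second_of S != first_of S
    & [set first_of S; second_of S] = S].
Proof.
move=> cardS.
have fS : first_of S \in S.
  by rewrite /first_of; case: pickP => [//|/eq_card0]; rewrite cardS.
have : second_of S \in S :\ first_of S.
  rewrite /second_of; case: pickP => [//|/eq_card0 S0].
  by move: cardS; rewrite (cardsD1 (first_of S)) fS S0.
case/setD1P => nsf sS; split=> //.
apply/eqP; rewrite eqEcard cardS cards2 eq_sym nsf andbT.
by apply/subsetP => v /set2P[]->.
Qed.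

Lemma inj_into_col_pairs P T : P \in class_matchings cl U -> inj_into P T ->
  [&& is_col_pairs U T, class_blocks T & blocks T == P].
Proof.
move=> CP TP; have T_inj := inj_into_inj TP.
move: (CP); rewrite class_matchingsE => /andP[partP /forall_inP clP].
have clT c : class_pair cl (T c) by apply/clP/inj_into_mem.
have cardT c : #|T c| = 2 by apply/eqP; case/andP: (clT c).
apply/and3P; split; last 2 first.
- exact/forallP.
- rewrite eqEcard card_imset // card_ord (card_class_matching CP) leqnn andbT.
  by apply/subsetP => _ /imsetP[c _ ->]; apply: inj_into_mem TP _.
pose pick2 (x : 'I_h * bool) := if x.2 then first_of (T x.1) else second_of (T x.1).
have pick2_mem x : pick2 x \in T x.1.
  by case: x => c []; have [] := first_second (cardT c).
apply/existsP; exists [ffun x => pick2 x]; apply/andP; split; last first.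
  apply/eqP/ffunP => c; rewrite !ffunE.
  by have [_ _ _ ->] := first_second (cardT c).
apply/andP; split; last first.
  apply/forallP => x; rewrite ffunE -(cover_partition partP).
  by apply/bigcupP; exists (T x.1); [apply: inj_into_mem TP _ | apply: pick2_mem].
apply/injectiveP => -[c e] [c' e']; rewrite !ffunE => ev.
have ecc : c = c'.
  apply: T_inj; apply/eqP/negPn/negP => nT.
  have := trivIsetP (partition_trivIset partP) _ _ (inj_into_mem TP c)
            (inj_into_mem TP c') nT.
  rewrite -setI_eq0 => /eqP/setP/(_ (pick2 (c, e))).
  by rewrite !inE (pick2_mem (c, e)) ev (pick2_mem (c', e')).
subst c'; have [_ _ nsf _] := first_second (cardT c).
by move: ev; rewrite /pick2 /=; case: e; case: e' => // ev; rewrite ev eqxx in nsf.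
Qed.

End BlockMatchings.

(** * The permanent is 2^(2^q - 1) times an odd integer *)

Definition odd_int (z : int) := exists k : int, z = 2 * k + 1.

Lemma odd_int_sign (e z : int) : e = 1 \/ e = -1 -> odd_int z -> odd_int (e * z).
Proof. by case=> -> [k ->]; [exists k; rewrite mul1r | exists (- k - 1); ring]. Qed.

Lemma prod_pm2 (I : finType) (A : {pred I}) (f : I -> int) :
  (forall i, i \in A -> f i = 2 \/ f i = -2) ->
  exists2 e : int, e = 1 \/ e = -1 & \prod_(i in A) f i = 2 ^+ #|A| * e.
Proof.
move=> f_pm2; rewrite -sum1_card.
apply: (big_rec2 (fun p n => exists2 e : int, e = 1 \/ e = -1 & p = 2 ^+ n * e)).
  by exists 1; [left | rewrite mulr1].
move=> i p n Ai [e e_pm1 ->]; rewrite exprS.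
case: (f_pm2 i Ai) => ->; first by exists e => //; ring.
by exists (- e); [case: e_pm1 => ->; [right | left]; rewrite ?opprK | ring].
Qed.

Lemma sum_odd_multiples (I : finType) (A : {pred I}) (f : I -> int) (c : int) :
  (forall i, i \in A -> exists2 z, odd_int z & f i = c * z) -> odd #|A| ->
  exists2 z, odd_int z & \sum_(i in A) f i = c * z.
Proof.
move=> f_odd oddA.
have [k ->] : exists k : int, \sum_(i in A) f i = c * (2 * k + #|A|%:R).
  rewrite -sum1_card.
  apply: (big_rec2 (fun s (n : nat) => exists k : int, s = c * (2 * k + n%:R))).
    by exists 0; ring.
  move=> i s n Ai [k ->]; have [z [m ->] ->] := f_odd i Ai.
  by exists (m + k); rewrite natrD; ring.
have [m ->] : exists m, #|A| = (2 * m + 1)%N.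
  by exists #|A|./2; have := odd_double_half #|A|; rewrite oddA; lia.
by exists (2 * (k + m%:R) + 1); [exists (k + m%:R) | rewrite natrD natrM; ring].
Qed.

(* The 2 x 2 permanent of two rows on the columns c and 2^q + c: the low bits of
   the rows combine by xor, their top bits only contribute signs. *)
Lemma sylv0_col_pair q (ya yb c : nat) :
  (ya < 2 ^ q.+1)%N -> (yb < 2 ^ q.+1)%N -> (c < 2 ^ q)%N ->
  sylv0 q.+1 ya (true * 2 ^ q + c) * sylv0 q.+1 yb (false * 2 ^ q + c) +
  sylv0 q.+1 yb (true * 2 ^ q + c) * sylv0 q.+1 ya (false * 2 ^ q + c) =
  sylv0 q (Nat.lxor (ya %% 2 ^ q) (yb %% 2 ^ q)) c *
    ((if (2 ^ q <= ya)%N then -1 else 1) + (if (2 ^ q <= yb)%N then -1 else 1)).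
Proof.
move=> /exp2S_splitP[ea [a [ha ->]]] /exp2S_splitP[eb [b [hb ->]]] hc.
rewrite !modnMDl !modn_small // !sylv0S // sylv0_lxorl //.
have top (e : bool) x : (x < 2 ^ q)%N -> (2 ^ q <= e * 2 ^ q + x)%N = e.
  by case: e => hx; rewrite ?mul1n ?leq_addr // mul0n add0n leqNgt hx.
by rewrite !top //; case: ea; case: eb; rewrite /= ?mulr1 ?mulrN1; ring.
Qed.

Section HpermStep.
Variables (q : nat) (J : finType) (U : {set J}) (y : J -> nat).
Hypotheses (cardU : #|U| = (2 ^ q + 2 ^ q)%N)
           (y_lt : forall j, j \in U -> (y j < 2 ^ q.+1)%N).

Definition top_bit j := (2 ^ q <= y j)%N.
Definition top_sign j : int := if top_bit j then -1 else 1.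
Definition low_xor (S : {set J}) := \big[Nat.lxor/0%N]_(j in S) (y j %% 2 ^ q)%N.
Definition sign_sum (S : {set J}) := \sum_(j in S) top_sign j.
Definition block_weight (T : {ffun 'I_(2 ^ q) -> {set J}}) :=
  \prod_c (sylv0 q (low_xor (T c)) c * sign_sum (T c)).

Lemma sign_sum_pair a b : a != b -> sign_sum [set a; b] = top_sign a + top_sign b.
Proof. by move=> nab; rewrite /sign_sum big_setU1 ?inE //= big_set1. Qed.

Lemma low_xor_pair a b : a != b ->
  low_xor [set a; b] = Nat.lxor (y a %% 2 ^ q) (y b %% 2 ^ q).
Proof. by move=> nab; rewrite /low_xor big_setU1 ?inE //= big_set1. Qed.

Lemma hpermS_col_pairs :
  hperm q.+1 U y = \sum_(T | is_col_pairs U T) block_weight T.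
Proof.
apply: (mulfI (x := (2 ^ 2 ^ q)%:R)); first by rewrite pnatr_eq0 expn_eq0.
rewrite hpermS perm_rows_col_pairs -sum_col_pairs; apply: eq_bigr => g gU.
apply: eq_bigr => c _; rewrite ffunE.
have nab : g (c, true) != g (c, false) by apply/eqP => /(inj_into_inj gU)[].
rewrite sylv0_col_pair ?y_lt ?(inj_into_mem gU) //.
by rewrite low_xor_pair // sign_sum_pair.
Qed.

Lemma sum_col_pairs_class_blocks :
  \sum_(T | is_col_pairs U T) block_weight T
  = \sum_(T | is_col_pairs U T && class_blocks top_bit T) block_weight T.
Proof.
rewrite (bigID (class_blocks top_bit)) /= [X in _ + X]big1 ?addr0 //.
move=> T /andP[/existsP[g /andP[gU /eqP defT]]].
rewrite /class_blocks negb_forall => /existsP[c]; rewrite /block_weight (bigD1 c) //=.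
rewrite -defT ffunE; set a := g (c, true); set b := g (c, false).
have nab : a != b by apply/eqP => /(inj_into_inj gU)[].
rewrite sign_sum_pair // /top_sign.
have [tab|] := eqVneq (top_bit a) (top_bit b); first by rewrite class_pair2.
by case: (top_bit a); case: (top_bit b) => //= _ _; rewrite ?addrN ?addNr mulr0 mul0r.
Qed.

Lemma sum_class_blocks_matchings :
  \sum_(T | is_col_pairs U T && class_blocks top_bit T) block_weight T
  = \sum_(P in class_matchings top_bit U) (\prod_(S in P) sign_sum S) * hperm q P low_xor.
Proof.
rewrite (partition_big (@blocks _ J) (mem (class_matchings top_bit U))) /=; last first.
  by move=> T /andP[]; apply: blocks_class_matching.
have [j0 _] : exists j0, j0 \in U.
  by apply/set0Pn; rewrite -card_gt0 cardU addn_gt0 expn_gt0.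
apply: eq_bigr => P CP.
rewrite (eq_bigl (inj_into P)) => [|T]; last first.
  apply/idP/idP => [/andP[/andP[TU _] TP]|TP]; first exact: col_pairs_inj_into TU TP.
  by have /and3P[-> -> ->] := inj_into_col_pairs cardU j0 CP TP.
rewrite /hperm /perm_rows mulr_sumr; apply: eq_bigr => T TP.
have /and3P[_ _ /eqP <-] := inj_into_col_pairs cardU j0 CP TP.
rewrite /block_weight big_split /= mulrC big_imset //=.
by move=> u v _ _; apply: (inj_into_inj TP).
Qed.

End HpermStep.

Theorem hperm_lxor0 q (J : finType) (U : {set J}) (y : J -> nat) :
  #|U| = (2 ^ q)%N -> (forall j, j \in U -> (y j < 2 ^ q)%N) ->
  \big[Nat.lxor/0%N]_(j in U) y j = 0%N ->
  exists2 z, odd_int z & hperm q U y = 2 ^+ (2 ^ q).-1 * z.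
Proof.
elim: q J U y => [|q IH] J U y cardU y_lt xor0.
  by exists 1; [exists 0; rewrite mulr0 add0r | rewrite hperm0 // expr0 mulr1].
have cardU2 : #|U| = (2 ^ q + 2 ^ q)%N by rewrite cardU expnS mul2n addnn.
have := big_lxor_exp2S y_lt; rewrite xor0 => /esym/eqP.
rewrite addn_eq0 muln_eq0 expn_eq0 orbF eqb0 => /andP[even_top /eqP low0].
rewrite hpermS_col_pairs // sum_col_pairs_class_blocks sum_class_blocks_matchings //.
apply: sum_odd_multiples; last first.
  by apply: odd_card_class_matchings; rewrite ?cardU2 ?addnn ?odd_double.
move=> P CP; have cardP := card_class_matching cardU2 CP.
move: (CP); rewrite class_matchingsE => /andP[partP /forall_inP clP].
have [z z_odd ->] : exists2 z, odd_int z & hperm q P (low_xor q y) = 2 ^+ (2 ^ q).-1 * z.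
  apply: IH => // [S _|]; first by apply: big_lxor_ltn_exp2 => j _; rewrite ltn_pmod ?expn_gt0.
  rewrite -(big_trivIset _ (E := fun j => y j %% 2 ^ q)%N) ?(partition_trivIset partP) //.
  by rewrite (cover_partition partP).
have [e e_pm1 ->] : exists2 e : int, e = 1 \/ e = -1 &
    \prod_(S in P) sign_sum q y S = 2 ^+ #|P| * e.
  apply: prod_pm2 => S /clP /class_pairP[a [b [nab tab ->]]].
  by rewrite sign_sum_pair // /top_sign tab; case: (top_bit q y b); [right | left].
exists (e * z); first exact: odd_int_sign.
have -> : (2 ^ q.+1).-1 = (2 ^ q + (2 ^ q).-1)%N by rewrite expnS; have := expn_gt0 2 q; lia.
by rewrite cardP exprD; ring.
Qed.

(** * Amplitudes of the scattering matrix *)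

Section Permanent.
Variables (R : comNzRingType) (n : nat).

Lemma permanent_scale_rows (a : 'I_n -> R) (A : 'M[R]_n) :
  permanent (\matrix_(i, j) (a i * A i j)) = (\prod_i a i) * permanent A.
Proof.
rewrite /permanent mulr_sumr; apply: eq_bigr => s _.
by rewrite -big_split; apply: eq_bigr => i _; rewrite mxE.
Qed.

Lemma permanent_col_perm (s : 'S_n) (A : 'M[R]_n) :
  permanent (col_perm s A) = permanent A.
Proof.
rewrite /permanent (reindex_inj (mulIg s^-1)%g); apply: eq_bigr => t _.
by apply: eq_bigr => i _; rewrite mxE permM permKV.
Qed.

Lemma permanent_map (S : comNzRingType) (f : {rmorphism R -> S}) (A : 'M[R]_n) :
  permanent (map_mx f A) = f (permanent A).
Proof.
rewrite /permanent rmorph_sum; apply: eq_bigr => s _.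
by rewrite rmorph_prod; apply: eq_bigr => i _; rewrite mxE.
Qed.

End Permanent.

Lemma amplitude_eq0 p n (s t : n.-tuple nat) :
  (amplitude p s t == 0) = (permanent (scattering p s t) == 0).
Proof.
have prod_fact_neq0 (u : seq nat) : (\prod_(1 <= k < (2 ^ p).+1) (mu u k)`!)%N != 0%N.
  by rewrite -lt0n prodn_gt0 // => k; apply: fact_gt0.
rewrite /amplitude mulf_eq0 invr_eq0 sqrtC_eq0 mulf_eq0 !pnatr_eq0.
by rewrite !(negbTE (prod_fact_neq0 _)) !orbF.
Qed.

Section HadamardRows.
Variables (q : nat) (y : 'I_(2 ^ q) -> nat).
Hypothesis y_lt : forall i, (y i < 2 ^ q)%N.

Definition hrows : 'M[int]_(2 ^ q) := \matrix_(i, j) sylv0 q (y i) j.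

Lemma permanent_hrows : permanent hrows = hperm q [set: 'I_(2 ^ q)] y.
Proof.
transitivity (\sum_(s : 'S_(2 ^ q)) \prod_c sylv0 q (y (s^-1%g c)) c).
  apply: eq_bigr => s _; rewrite (reindex_inj (@perm_inj _ s^-1%g)) /=.
  by apply: eq_bigr => c _; rewrite mxE permKV.
rewrite (reindex_inj (@invg_inj _)) /= /hperm /perm_rows.
rewrite (eq_bigl (fun f : {ffun 'I_(2 ^ q) -> 'I_(2 ^ q)} => injectiveb f)) => [|f]; last first.
  by rewrite /inj_into; case: (injectiveb f) => //=; apply/forallP => c; rewrite inE.
rewrite (reindex (fun s : 'S_(2 ^ q) => pval s)) /=; last first.
  by exists (insubd (1%g : 'S_(2 ^ q))) => [s _|f f_inj]; [exact: valKd | rewrite insubdK].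
apply: eq_big => [s|s _]; first by rewrite (valP s).
by apply: eq_bigr => c _; rewrite invgK pvalE.
Qed.

Lemma permanent_hrows_neq0 : \big[Nat.lxor/0%N]_i y i = 0%N -> permanent hrows != 0.
Proof.
move=> xor0; have cardT : #|[set: 'I_(2 ^ q)]| = (2 ^ q)%N by rewrite cardsT card_ord.
rewrite permanent_hrows; have [|z [k ->] ->] := hperm_lxor0 cardT (fun i _ => y_lt i).
  by rewrite -[RHS]xor0; apply: eq_bigl => i; rewrite in_setT.
by rewrite mulf_eq0 expf_eq0 /=; lia.
Qed.

Definition lxor_ord a (a_lt : (a < 2 ^ q)%N) (j : 'I_(2 ^ q)) : 'I_(2 ^ q) :=
  Ordinal (lxor_ltn_exp2 a_lt (ltn_ord j)).

Lemma lxor_ord_inj a (a_lt : (a < 2 ^ q)%N) : injective (lxor_ord a_lt).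
Proof. by move=> j j' /(congr1 val)/(can_inj (lxorKl a)) e; apply: val_inj. Qed.

Lemma permanent_hrows_eq0 : \big[Nat.lxor/0%N]_i y i != 0%N -> permanent hrows = 0.
Proof.
set X := \big[Nat.lxor/0%N]_i y i => X_neq0.
have X_lt : (X < 2 ^ q)%N by apply: big_lxor_ltn_exp2 => i _.
have [a a_lt Xa] : exists2 a, (a < 2 ^ q)%N & sylv0 q X a = -1.
  by apply: sylv0_row_neg; rewrite lt0n X_neq0.
suff : permanent hrows = - permanent hrows by lia.
rewrite -{1}(permanent_col_perm (perm (@lxor_ord_inj _ a_lt))).
have -> : col_perm (perm (@lxor_ord_inj _ a_lt)) hrows
          = \matrix_(i, j) (sylv0 q (y i) a * hrows i j).
  by apply/matrixP => i j; rewrite !mxE permE sylv0_lxorr.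
by rewrite permanent_scale_rows prod_sylv0_lxor // Xa mulN1r.
Qed.

End HadamardRows.

Lemma sylvester_input_state k q c x (j : 'I_(2 ^ q)) :
  (c < 2 ^ k)%N -> (x < 2 ^ (k + q))%N ->
  sylvester (k + q) x.+1 (tnth (input_state (2 ^ q) c) j)
    = sylv0 k (x %/ 2 ^ q) c * sylv0 q (x %% 2 ^ q) j.
Proof.
move=> c_lt x_lt; rewrite /sylvester tnth_mktuple /= [(j + _)%N]addnC mulnC.
rewrite {1}(divn_eq x (2 ^ q)) sylv0_kron ?ltn_pmod ?expn_gt0 //.
by rewrite ltn_divLR ?expn_gt0 // -expnD.
Qed.

Lemma permanent_scattering_input k q c (t : (2 ^ q).-tuple nat) :
  (c < 2 ^ k)%N -> (forall i, 0 < tnth t i <= 2 ^ (k + q))%N ->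
  exists2 a : algC, a != 0 & permanent (scattering (k + q) (input_state (2 ^ q) c) t)
    = a * (permanent (hrows (fun i => (tnth t i).-1 %% 2 ^ q)%N))%:~R.
Proof.
move=> c_lt t_in; pose D : algC := sqrtC (2 ^ (k + q))%:R.
have D_neq0 : D != 0 by rewrite sqrtC_eq0 pnatr_eq0 expn_eq0.
exists (\prod_i ((sylv0 k ((tnth t i).-1 %/ 2 ^ q) c)%:~R / D)).
  by apply/prodf_neq0 => i _; rewrite mulf_neq0 ?invr_eq0 ?intr_eq0 ?sylv0_neq0.
rewrite -permanent_map -permanent_scale_rows; congr permanent.
apply/matrixP => i j; rewrite !mxE /Umat.
have /andP[t_gt0 t_le] := t_in i; rewrite -(prednK t_gt0).
by rewrite sylvester_input_state ?prednK // intrM mulrAC.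
Qed.

Theorem proposition7 (k q c : nat) (hc : (c <= 2 ^ k - 1)%N)
  (t : (2 ^ q).-tuple nat) (ht : is_state (2 ^ (k + q)) t) :
  suppressed (k + q) (input_state (2 ^ q) c) t <-> xor_beta q t <> 0%N.
Proof.
have c_lt : (c < 2 ^ k)%N by have := expn_gt0 2 k; lia.
have t_in i : (0 < tnth t i <= 2 ^ (k + q))%N.
  by case/andP: ht => _ /allP; apply; apply: mem_tnth.
set y := fun i => ((tnth t i).-1 %% 2 ^ q)%N.
have y_lt i : (y i < 2 ^ q)%N by rewrite ltn_pmod ?expn_gt0.
have -> : xor_beta q t = \big[Nat.lxor/0%N]_i y i.
  by rewrite /xor_beta foldrE big_map big_tuple.
rewrite /suppressed (rwP eqP) amplitude_eq0.
have [a a_neq0 ->] := permanent_scattering_input c_lt t_in.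
rewrite mulf_eq0 (negbTE a_neq0) intr_eq0 /=.
have [xor0|xor_neq0] := eqVneq (\big[Nat.lxor/0%N]_i y i) 0%N.
  by rewrite (negbTE (permanent_hrows_neq0 y_lt xor0)).
by rewrite permanent_hrows_eq0 // eqxx; split=> // _; apply/eqP.
Qed.
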